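(* Let $\mathfrak{A}[\tau]$ be a *-semisimple topological partial *-algebra with multiplication core $\mathfrak{B}$ containing the unit $e$ of $\mathfrak{A}$. Let $x,y\in\mathfrak{A}$ be such that the strong product $x\bullet y$ is well-defined with respect to $\mathcal{M}=\mathcal{P}_{\mathfrak{B}}(\mathfrak{A})$. Then for every quasi-symmetric $(\tau,\mathsf{t}_s)$-continuous *-representation $\pi$ of $\mathfrak{A}$ with $\pi(\mathfrak{B})\subset\mathcal{L}^\dagger(\mathcal{D}(\pi))$ and $\pi(e)=I_{\mathcal{D}(\pi)}$, the strong product $\pi(x)\circ\pi(y)$ is well-defined and $\pi(x\bullet y)=\pi(x)\circ\pi(y)$.
   Context: A partial *-algebra is a complex vector space $\mathfrak{A}$ with a conjugate-linear involution and a distributive partial multiplication on $\Gamma\subset\mathfrak{A}\times\mathfrak{A}$ such that $(x,y)\in\Gamma$ iff $(y^*,x^* )\in\Gamma$, then $(xy)^*=y^*x^*$; $L(y)=\{x:(x,y)\in\Gamma\}$, $R(y)=\{x:(y,x)\in\Gamma\}$; $R\mathfrak{A}$, $L\mathfrak{A}$ are the universal right/left multipliers; a unit is $e=e^*\in R\mathfrak{A}\cap L\mathfrak{A}$ with $xe=ex=x$. For a dense subspace $\mathcal{D}$ of a Hilbert space $\mathcal{H}$, $\mathcal{L}^\dagger(\mathcal{D},\mathcal{H})$ is the set of linear operators $X$ with domain $\mathcal{D}$ and $D(X^* )\supseteq\mathcal{D}$, $X^\dagger=X^*|_{\mathcal{D}}$, weak product $X_1\Box X_2:=(X_1^\dagger)^*X_2$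 defined when $X_2\mathcal{D}\subset D((X_1^\dagger)^* )$ and $X_1^*\mathcal{D}\subset D(X_2^* )$; $\mathcal{L}^\dagger(\mathcal{D})=\{X\in\mathcal{L}^\dagger(\mathcal{D},\mathcal{H}):X\mathcal{D}\subset\mathcal{D},X^\dagger\mathcal{D}\subset\mathcal{D}\}$. The strong product $X\circ Y$ of $X,Y\in\mathcal{L}^\dagger(\mathcal{D},\mathcal{H})$ is well-defined when $Y\mathcal{D}\subset D(\overline{X})$ and $X^\dagger\mathcal{D}\subset D(\overline{Y^\dagger})$, and then $X\circ Y=\overline{X}Y$. A *-representation is a linear $\pi:\mathfrak{A}\to\mathcal{L}^\dagger(\mathcal{D}(\pi),\mathcal{H})$ with $\pi(x^* )=\pi(x)^\dagger$ such that $x\in L(y)$ implies $\pi(x)\Box\pi(y)$ defined and equal to $\pi(xy)$; $(\tau,\mathsf{t}_s)$-continuous means $x\mapsto\pi(x)\xi$ is continuous for each $\xi\in\mathcal{D}(\pi)$. $\pi$ is quasi-symmetric if for every $x\in\mathfrak{A}$: $\bigcap_{z\in L(x)}D\big((\pi(x)^*|_{\pi(z^* )\mathcal{D}(\pi)})^*\big)=D(\overline{\pi(x)})$ and $\bigcap_{v\in R(x)}D\big((\pi(x^* )^*|_{\pi(v)\mathcal{D}(\pi)})^*\big)=D(\overline{\pi(x)^\dagger})$. A topological partial *-algebra is a partial *-algebra with a Hausdorff locally convex topology $\tau$ such that each map $y\in R(x)\mapsto xy$ is closed. $\tau^*$ is given by seminorms $\max\{p(x),p(x^* )\}$. A multiplication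 core is a subspace $\mathfrak{B}\subseteq R\mathfrak{A}$ with: $e\in\mathfrak{B}$ if a unit exists; $\mathfrak{B}\mathfrak{B}\subseteq\mathfrak{B}$; $\mathfrak{B}$ $\tau^*$-dense; $x\mapsto xb$ $\tau$-continuous for $b\in\mathfrak{B}$; $b^*(xc)=(b^*x)c$ for $x\in\mathfrak{A}$, $b,c\in\mathfrak{B}$. For a positive sesquilinear form $\varphi$ on $\mathfrak{A}\times\mathfrak{A}$, $\lambda_\varphi(x)=x+N_\varphi$ ($N_\varphi=\{x:\varphi(x,x)=0\}$) in the completion $\mathcal{H}_\varphi$ of $\mathfrak{A}/N_\varphi$; $\varphi$ is an ips-form with core $\mathfrak{B}$ if $\mathfrak{B}\subset R\mathfrak{A}$, $\lambda_\varphi(\mathfrak{B})$ is dense in $\mathcal{H}_\varphi$, $\varphi(xa,b)=\varphi(a,x^*b)$ and $\varphi(x^*a,yb)=\varphi(a,(xy)b)$ whenever $x\in L(y)$, for $a,b\in\mathfrak{B}$. $\mathcal{P}_{\mathfrak{B}}(\mathfrak{A})$ is the set of ips-forms with core $\mathfrak{B}$ that are $\tau$-continuous ($|\varphi(x,y)|\le p(x)p(y)$ for some continuous seminorm $p$). $\mathfrak{A}$ is *-semisimple if for every $x\neq0$ there is a $(\tau,\mathsf{t}_s)$-continuous *-representation $\pi$ with $\pi(x)\neq0$. Strong product: for $x,y\in\mathfrak{A}$, $x\bullet y$ is well-defined with respect to $\mathcal{M}$ if $x\in L(y)$ and (sm$_1$) $\varphi((xy)a,z^*b)=\varphi(ya,(x^*z^*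 )b)$ for all $z\in L(x)$, $\varphi\in\mathcal{M}$, $a,b\in\mathfrak{B}$; (sm$_2$) $\varphi((y^*x^* )a,vb)=\varphi(x^*a,(yv)b)$ for all $v\in R(y)$, $\varphi\in\mathcal{M}$, $a,b\in\mathfrak{B}$; then $x\bullet y:=xy$. *)

From HB Require Import structures.
From mathcomp Require Import all_boot all_order all_algebra.
From mathcomp Require Import reals.
From mathcomp Require Import complex.
From Stdlib Require List.
Set Implicit Arguments. Unset Strict Implicit. Unset Printing Implicit Defensive.
Import Order.TTheory GRing.Theory Num.Theory.
Local Open Scope ring_scope.

Section Hilbert.
Context (R : realType) (H : lmodType R[i]) (ip : H -> H -> R[i]).

Definition hnorm (v : H) : R[i] := sqrtC (ip v v).

Definition is_inner_product : Prop :=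
  [/\ (forall (a : R[i]) u v w, ip (a *: u + v) w = a * ip u w + ip v w),
      (forall u v, ip u v = (ip v u)^*),
      (forall u, 0 <= ip u u) &
      (forall u, ip u u = 0 -> u = 0)].

Definition hcauchy (u : nat -> H) : Prop :=
  forall eps : R[i], 0 < eps -> exists N, forall m n,
    (N <= m)%N -> (N <= n)%N -> hnorm (u m - u n) < eps.

Definition hcvg (u : nat -> H) (l : H) : Prop :=
  forall eps : R[i], 0 < eps -> exists N, forall n, (N <= n)%N -> hnorm (u n - l) < eps.

Definition is_hilbert : Prop :=
  is_inner_product /\ forall u, hcauchy u -> exists l, hcvg u l.

Definition dense_subspace (D : H -> Prop) : Prop :=
  [/\ D 0,
      (forall (a : R[i]) u v, D u -> D v -> D (a *: u + v)) &
      (forall h (eps : R[i]), 0 < eps -> exists d, D d /\ hnorm (h - d) < eps)].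

(* (possibly multivalued) operators as graphs *)
Definition graph := H -> H -> Prop.
Definition gdom (G : graph) (u : H) : Prop := exists v, G u v.
Definition op_graph (D : H -> Prop) (X : H -> H) : graph := fun u v => D u /\ v = X u.
Definition adjoint (G : graph) : graph := fun v w => forall u z, G u z -> ip z v = ip u w.
Definition gclosure (G : graph) : graph := fun u v =>
  forall eps : R[i], 0 < eps ->
    exists u' v', [/\ G u' v', hnorm (u - u') < eps & hnorm (v - v') < eps].
Definition grestrict (G : graph) (S : H -> Prop) : graph := fun u v => S u /\ G u v.
Definition image (D : H -> Prop) (f : H -> H) : H -> Prop := fun w => exists u, D u /\ w = f u.

Definition dagger (D : H -> Prop) (X : H -> H) : graph := grestrict (adjoint (op_graph D X)) D.

Definition in_Ldagger (D : H -> Prop) (X : H -> H) : Prop :=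
  (forall (a : R[i]) u v, D u -> D v -> X (a *: u + v) = a *: X u + X v) /\
  (forall u, D u -> gdom (adjoint (op_graph D X)) u).

Definition in_LdaggerD (D : H -> Prop) (X : H -> H) : Prop :=
  [/\ in_Ldagger D X, (forall u, D u -> D (X u)) & (forall u v, dagger D X u v -> D v)].

Definition weak_product_eq (D : H -> Prop) (X1 X2 Z : H -> H) : Prop :=
  [/\ (forall u, D u -> gdom (adjoint (dagger D X1)) (X2 u)),
      (forall u v, dagger D X1 u v -> gdom (adjoint (op_graph D X2)) v) &
      (forall u, D u -> adjoint (dagger D X1) (X2 u) (Z u))].

Definition strong_product_op_wd (D : H -> Prop) (X Y : H -> H) : Prop :=
  (forall u, D u -> gdom (gclosure (op_graph D X)) (Y u)) /\
  (forall u v, dagger D X u v -> gdom (gclosure (dagger D Y)) v).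

Definition strong_product_op_eq (D : H -> Prop) (X Y Z : H -> H) : Prop :=
  forall u, D u -> gclosure (op_graph D X) (Y u) (Z u).

End Hilbert.

Section PartialAlgebra.
Context (R : realType) (A : lmodType R[i]) (star : A -> A)
        (Gam : A -> A -> Prop) (mul : A -> A -> A).

Definition partial_star_algebra : Prop :=
  [/\ (forall (a : R[i]) x y, star (a *: x + y) = a^* *: star x + star y),
      (forall x, star (star x) = x),
      (forall x y, Gam x y <-> Gam (star y) (star x)),
      (forall x y, Gam x y -> star (mul x y) = mul (star y) (star x)) &
      (forall x y z (a b : R[i]), Gam x y -> Gam x z ->
          Gam x (a *: y + b *: z) /\ mul x (a *: y + b *: z) = a *: mul x y + b *: mul x z) /\
      (forall x y z (a b : R[i]), Gam y x -> Gam z x ->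
          Gam (a *: y + b *: z) x /\ mul (a *: y + b *: z) x = a *: mul y x + b *: mul z x)].

Definition RA (x : A) : Prop := forall y, Gam y x.
Definition LA (x : A) : Prop := forall y, Gam x y.

Definition is_unit (e : A) : Prop :=
  [/\ star e = e, RA e, LA e & forall x, mul x e = x /\ mul e x = x].

Definition subspace (B : A -> Prop) : Prop :=
  B 0 /\ forall (a : R[i]) x y, B x -> B y -> B (a *: x + y).

Definition seminorm (p : A -> R[i]) : Prop :=
  [/\ (forall x, 0 <= p x), (forall x y, p (x + y) <= p x + p y) &
      (forall (a : R[i]) x, p (a *: x) = `|a| * p x)].

Definition tnbhs (P : (A -> R[i]) -> Prop) (x : A) (U : A -> Prop) : Prop :=
  exists (s : seq (A -> R[i])) (eps : R[i]),
    [/\ (forall p, List.In p s -> P p), 0 < eps &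
        forall y, (forall p, List.In p s -> p (y - x) < eps) -> U y].

Definition hausdorff (P : (A -> R[i]) -> Prop) : Prop :=
  forall x y, x <> y -> exists U V,
    [/\ tnbhs P x U, tnbhs P y V & forall z, ~ (U z /\ V z)].

Definition tcont (P : (A -> R[i]) -> Prop) (f : A -> A) : Prop :=
  forall x0 V, tnbhs P (f x0) V -> tnbhs P x0 (fun x => V (f x)).

(* the map y in R(x) |-> xy is closed (closed graph in A x A) *)
Definition left_mult_closed (P : (A -> R[i]) -> Prop) (x : A) : Prop :=
  forall y z,
    (forall U V, tnbhs P y U -> tnbhs P z V -> exists y', [/\ Gam x y', U y' & V (mul x y')]) ->
    Gam x y /\ mul x y = z.

Definition topological_partial_star_algebra (P : (A -> R[i]) -> Prop) : Prop :=
  [/\ partial_star_algebra, (forall p, P p -> seminorm p), hausdorff P &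
      forall x, left_mult_closed P x].

(* the family of seminorms generating tau^* *)
Definition Pstar (P : (A -> R[i]) -> Prop) (q : A -> R[i]) : Prop :=
  exists p, P p /\ q = (fun x => Num.max (p x) (p (star x))).

Definition multiplication_core (P : (A -> R[i]) -> Prop) (B : A -> Prop) : Prop :=
  [/\ subspace B /\ (forall b, B b -> RA b),
      (forall e, is_unit e -> B e) /\
      (forall b c, B b -> B c -> B (mul b c)),
      (forall x U, tnbhs (Pstar P) x U -> exists b, B b /\ U b),
      (forall b, B b -> tcont P (fun x => mul x b)) &
      (forall x b c, B b -> B c ->
         [/\ Gam (star b) (mul x c), Gam (star b) x &
             mul (star b) (mul x c) = mul (mul (star b) x) c])].

Definition pos_sesq_form (phi : A -> A -> R[i]) : Prop :=
  [/\ (forall (a : R[i]) x y z, phi (a *: x + y) z = a * phi x z + phi y z),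
      (forall (a : R[i]) x y z, phi z (a *: x + y) = a^* * phi z x + phi z y) &
      (forall x, 0 <= phi x x)].

Definition ips_form (B : A -> Prop) (phi : A -> A -> R[i]) : Prop :=
  [/\ pos_sesq_form phi,
      (forall b, B b -> RA b),
      (* lambda_phi(B) dense in H_phi *)
      (forall x (eps : R[i]), 0 < eps -> exists b, B b /\ sqrtC (phi (x - b) (x - b)) < eps),
      (forall x a b, B a -> B b -> phi (mul x a) b = phi a (mul (star x) b)) &
      (forall x y a b, Gam x y -> B a -> B b ->
          phi (mul (star x) a) (mul y b) = phi a (mul (mul x y) b))].

Definition cont_seminorm (P : (A -> R[i]) -> Prop) (q : A -> R[i]) : Prop :=
  seminorm q /\ forall x0 (eps : R[i]), 0 < eps -> tnbhs P x0 (fun x => `|q x - q x0| < eps).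

Definition tau_cont_form (P : (A -> R[i]) -> Prop) (phi : A -> A -> R[i]) : Prop :=
  exists q, cont_seminorm P q /\ forall x y, `|phi x y| <= q x * q y.

Definition PB (P : (A -> R[i]) -> Prop) (B : A -> Prop) (phi : A -> A -> R[i]) : Prop :=
  ips_form B phi /\ tau_cont_form P phi.

Definition strong_product_wd (M : (A -> A -> R[i]) -> Prop) (B : A -> Prop) (x y : A) : Prop :=
  [/\ Gam x y,
      (forall z phi a b, Gam z x -> M phi -> B a -> B b ->
         phi (mul (mul x y) a) (mul (star z) b) = phi (mul y a) (mul (mul (star x) (star z)) b)) &
      (forall v phi a b, Gam y v -> M phi -> B a -> B b ->
         phi (mul (mul (star y) (star x)) a) (mul v b) = phi (mul (star x) a) (mul (mul y v) b))].

Definition star_rep (H : lmodType R[i]) (ip : H -> H -> R[i]) (D : H -> Prop) (pi : A -> H -> H) : Prop :=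
  [/\ dense_subspace ip D,
      (forall (a : R[i]) x y u, D u -> pi (a *: x + y) u = a *: pi x u + pi y u),
      (forall x, in_Ldagger ip D (pi x)),
      (forall x u, D u -> adjoint ip (op_graph D (pi x)) u (pi (star x) u)) &
      (forall x y, Gam x y -> weak_product_eq ip D (pi x) (pi y) (pi (mul x y)))].

Definition rep_cont (P : (A -> R[i]) -> Prop) (H : lmodType R[i]) (ip : H -> H -> R[i])
  (D : H -> Prop) (pi : A -> H -> H) : Prop :=
  forall u, D u -> forall x0 (eps : R[i]), 0 < eps ->
    tnbhs P x0 (fun x => hnorm ip (pi x u - pi x0 u) < eps).

Definition quasi_symmetric (H : lmodType R[i]) (ip : H -> H -> R[i])
  (D : H -> Prop) (pi : A -> H -> H) : Prop :=
  forall x,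
    (forall u, (forall z, Gam z x ->
        gdom (adjoint ip (grestrict (adjoint ip (op_graph D (pi x))) (image D (pi (star z))))) u)
      <-> gdom (gclosure ip (op_graph D (pi x))) u) /\
    (forall u, (forall v, Gam x v ->
        gdom (adjoint ip (grestrict (adjoint ip (op_graph D (pi (star x)))) (image D (pi v)))) u)
      <-> gdom (gclosure ip (dagger ip D (pi x))) u).

Definition star_semisimple (P : (A -> R[i]) -> Prop) : Prop :=
  forall x, x <> 0 -> exists (H : lmodType R[i]) (ip : H -> H -> R[i]) (D : H -> Prop)
    (pi : A -> H -> H),
    [/\ is_hilbert ip, star_rep ip D pi, rep_cont P ip D pi & exists u, D u /\ pi x u <> 0].

End PartialAlgebra.

From Pilot Require Import Defs.
From HB Require Import structures.
From mathcomp Require Import all_boot all_order all_algebra.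
From mathcomp Require Import reals complex.
From mathcomp Require Import ring.
Import Order.TTheory GRing.Theory Num.Theory.
Set Implicit Arguments. Unset Strict Implicit.
Local Open Scope ring_scope.

(* For every [xi] in the domain of [pi], the vector form
   [phi_xi(a, b) = <pi(a) xi, pi(b) xi>] lies in [P_B(A)]: its tau-continuity and
   the density of [lambda(B)] come from the (tau, t_s)-continuity of [pi], the
   ips identities from [pi] being a *-representation with [pi(B)] in [L†(D)].
   Evaluating (sm_1) at [phi_xi] with [a = b = e] and polarizing in [xi] gives
   [<pi(x* z* ) d, pi(y) u> = <pi(z* ) d, pi(xy) u>] for all [z] in [L(x)], i.e.
   [pi(y) u] lies in the domain of each [(pi(x)^* |_{pi(z* ) D})^*]; quasi-symmetry
   turns this into [pi(y) u] in [D(closure pi(x))], and the value there is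
   [pi(xy) u] since the closure of [pi(x)] is contained in [pi(x* )^*].
   (sm_2) yields the condition on [pi(x)†] in the same way. *)

Section InnerProduct.
Context (R : realType) (H : lmodType R[i]) (ip : H -> H -> R[i]).
Hypothesis Hip : is_inner_product ip.

Lemma ip_linl a u v w : ip (a *: u + v) w = a * ip u w + ip v w.
Proof. by case: Hip => h *; apply: h. Qed.
Lemma ipC u v : ip u v = (ip v u)^*.
Proof. by case: Hip => _ h *; apply: h. Qed.
Lemma ip_ge0 u : 0 <= ip u u.
Proof. by case: Hip => _ _ h *; apply: h. Qed.
Lemma ip_eq0 u : ip u u = 0 -> u = 0.
Proof. by case: Hip => _ _ _ h *; apply: h. Qed.

Lemma ipDl u v w : ip (u + v) w = ip u w + ip v w.
Proof. by rewrite -[u]scale1r ip_linl mul1r scale1r. Qed.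
Lemma ip0l w : ip 0 w = 0.
Proof. by apply: (addrI (ip 0 w)); rewrite -ipDl !addr0. Qed.
Lemma ipZl a u w : ip (a *: u) w = a * ip u w.
Proof. by rewrite -[a *: u]addr0 ip_linl ip0l addr0. Qed.
Lemma ipNl u w : ip (- u) w = - ip u w.
Proof. by rewrite -scaleN1r ipZl mulN1r. Qed.
Lemma ipBl u v w : ip (u - v) w = ip u w - ip v w.
Proof. by rewrite ipDl ipNl. Qed.
Lemma ipDr u v w : ip w (u + v) = ip w u + ip w v.
Proof. by rewrite ipC ipDl rmorphD /= -!ipC. Qed.
Lemma ipZr a u w : ip w (a *: u) = a^* * ip w u.
Proof. by rewrite ipC ipZl rmorphM /= -ipC. Qed.
Lemma ip0r w : ip w 0 = 0.
Proof. by rewrite ipC ip0l conjC0. Qed.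
Lemma ipNr u w : ip w (- u) = - ip w u.
Proof. by rewrite ipC ipNl rmorphN /= -ipC. Qed.
Lemma ipBr u v w : ip w (u - v) = ip w u - ip w v.
Proof. by rewrite ipDr ipNr. Qed.

Lemma hnorm_ge0 u : 0 <= hnorm ip u.
Proof. by rewrite /hnorm sqrtC_ge0 ip_ge0. Qed.
Lemma hnormK u : hnorm ip u ^+ 2 = ip u u.
Proof. by rewrite /hnorm sqrtCK. Qed.
Lemma hnorm_real u : hnorm ip u \is Num.real.
Proof. exact/ger0_real/hnorm_ge0. Qed.
Lemma hnorm_eq0 u : hnorm ip u = 0 -> u = 0.
Proof. by move/eqP; rewrite /hnorm sqrtC_eq0 => /eqP /ip_eq0. Qed.

Lemma cauchy_schwarz_sq u v : ip u v * (ip u v)^* <= ip u u * ip v v.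
Proof.
have [->|v0] := eqVneq v 0; first by rewrite !ip0r mul0r mulr0.
have n0 : ip v v != 0 by apply: contra v0 => /eqP/ip_eq0 ->.
have cn : (ip v v)^* = ip v v by rewrite geC0_conj // ip_ge0.
set c := ip u v; set n := ip v v.
(* expand [0 <= <u - (c/n) v, u - (c/n) v>] *)
have := ip_ge0 (u - (c / n) *: v).
rewrite ipBl !ipBr !ipZl !ipZr rmorphM fmorphV /= cn -/c -/n [ip v u]ipC -/c.
have -> : ip u u - c^* / n * c - (c / n * c^* - c / n * (c^* / n * n)) =
          ip u u - c * c^* / n by field.
by rewrite subr_ge0 ler_pdivrMr // lt_def n0 ip_ge0.
Qed.

Lemma cauchy_schwarz u v : `|ip u v| <= hnorm ip u * hnorm ip v.
Proof.
rewrite /hnorm -sqrtCM ?nnegrE ?ip_ge0 //.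
rewrite -(sqrCK (normr_ge0 (ip u v))) ler_sqrtC ?nnegrE ?exprn_ge0 ?mulr_ge0 ?ip_ge0 //.
by rewrite normCK cauchy_schwarz_sq.
Qed.

Lemma addC_conj_le (z : R[i]) : z + z^* <= 2 * `|z|.
Proof.
have -> : z + z^* = 2 * 'Re z by rewrite ReE; field.
by rewrite ler_pM2l // (leif_Re_Creal z).
Qed.

Lemma hnormD u v : hnorm ip (u + v) <= hnorm ip u + hnorm ip v.
Proof.
have h0 : 0 <= hnorm ip u + hnorm ip v by rewrite addr_ge0 ?hnorm_ge0.
rewrite {1}/hnorm -(sqrCK h0) ler_sqrtC ?nnegrE ?ip_ge0 ?exprn_ge0 //.
rewrite sqrrD !hnormK ipDl !ipDr [ip v u]ipC.
have re_le : ip u v + (ip u v)^* <= 2 * (hnorm ip u * hnorm ip v).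
  by apply: (le_trans (addC_conj_le _)); rewrite ler_pM2l // cauchy_schwarz.
have -> : ip u u + ip u v + ((ip u v)^* + ip v v) =
          ip u u + ip v v + (ip u v + (ip u v)^*) by ring.
have -> : ip u u + hnorm ip u * hnorm ip v *+ 2 + ip v v =
          ip u u + ip v v + 2 * (hnorm ip u * hnorm ip v) by rewrite mulr2n; ring.
by rewrite lerD2l.
Qed.

Lemma hnormZ a u : hnorm ip (a *: u) = `|a| * hnorm ip u.
Proof.
rewrite /hnorm ipZl ipZr mulrA -normCK -[_ ^+ 2 * _]/(_ * _).
by rewrite sqrtCM ?nnegrE ?exprn_ge0 ?ip_ge0 // sqrCK.
Qed.

Lemma hnorm_distC u v : hnorm ip (u - v) = hnorm ip (v - u).
Proof. by rewrite -opprB /hnorm ipNl ipNr opprK. Qed.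

Lemma hnorm_dist_dist u v : `|hnorm ip u - hnorm ip v| <= hnorm ip (u - v).
Proof.
rewrite real_ler_norml ?rpredB ?hnorm_real //; apply/andP; split.
  rewrite lerNl opprB lerBlDr hnorm_distC.
  by have := hnormD (v - u) u; rewrite subrK.
by rewrite lerBlDr; have := hnormD (u - v) v; rewrite subrK.
Qed.

Lemma ge0_le_eps_eq0 (c : R[i]) : 0 <= c -> (forall eps, 0 < eps -> c <= eps) -> c = 0.
Proof.
move=> c0 h; apply/eqP; rewrite eq_le c0 andbT; apply/negP => cn.
have cp : 0 < c by rewrite lt_def c0 andbT; apply/eqP => c0e; move: cn; rewrite c0e lexx.
have lt_half : c / 2 < c.
  by rewrite -subr_gt0 (_ : c - c / 2 = c / 2); [exact: divr_gt0 | field].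
by have := lt_le_trans lt_half (h _ (divr_gt0 cp (ltr0Sn _ 1))); rewrite ltxx.
Qed.

Lemma norm_le_eps_eq0 (c a b : R[i]) : 0 <= a -> 0 <= b ->
  (forall eps, 0 < eps -> `|c| <= a * eps + b * eps) -> c = 0.
Proof.
move=> a0 b0 h; apply/normr0_eq0/ge0_le_eps_eq0 => // eps ep.
have Kp : 0 < a + b + 1 by rewrite ltr_wpDl // addr_ge0.
apply: (le_trans (h (eps / (a + b + 1)) (divr_gt0 ep Kp))).
rewrite -mulrDl (@le_trans _ _ ((a + b + 1) * (eps / (a + b + 1)))) //.
  by rewrite ler_wpM2r ?lerDl // ltW // divr_gt0.
by rewrite mulrC divfK ?gt_eqF.
Qed.

Lemma ip_dense_inj (D : H -> Prop) (w1 w2 : H) : dense_subspace ip D ->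
  (forall d, D d -> ip d w1 = ip d w2) -> w1 = w2.
Proof.
case=> _ _ dens h; apply/eqP; rewrite -subr_eq0; apply/eqP/hnorm_eq0.
have hz : forall d, D d -> ip d (w1 - w2) = 0 by move=> d Dd; rewrite ipBr h // subrr.
move: (w1 - w2) hz => k hz.
apply: ge0_le_eps_eq0 => [|eps ep]; first exact: hnorm_ge0.
have [kp|] := boolP (0 < hnorm ip k); last first.
  by rewrite lt_def hnorm_ge0 andbT negbK => /eqP ->; exact: ltW.
have [d [Dd hd]] := dens k eps ep.
have : hnorm ip k ^+ 2 <= eps * hnorm ip k.
  rewrite hnormK -(ger0_norm (ip_ge0 k)).
  have -> : ip k k = ip (k - d) k by rewrite ipBl (hz d Dd) subr0.
  by apply: (le_trans (cauchy_schwarz _ _)); rewrite ler_pM2r // ltW.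
by rewrite expr2 ler_pM2r.
Qed.

Definition linear_on (D : H -> Prop) (f : H -> H) :=
  forall (a : R[i]) u v, D u -> D v -> f (a *: u + v) = a *: f u + f v.

Lemma polarization (D : H -> Prop) (f g k l : H -> H) :
  (forall (a : R[i]) u v, D u -> D v -> D (a *: u + v)) ->
  linear_on D f -> linear_on D g -> linear_on D k -> linear_on D l ->
  (forall u, D u -> ip (f u) (g u) = ip (k u) (l u)) ->
  forall u v, D u -> D v -> ip (f u) (g v) = ip (k u) (l v).
Proof.
move=> DD lf lg lk ll h u v Du Dv.
have diag a : ip (a *: f v + f u) (a *: g v + g u) = ip (a *: k v + k u) (a *: l v + l u).
  by rewrite -(lf a v u) -?(lg a v u) -?(lk a v u) -?(ll a v u) //; exact/h/DD.
have E1 := diag 1; have Ei := diag 'i.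
rewrite !ipDl !ipDr !ipZl !ipZr ?conjC1 ?conjCi ?mul1r (h u Du) (h v Dv) in E1 Ei.
move/eqP: E1; rewrite -subr_eq0 => /eqP E1.
move/eqP: Ei; rewrite -subr_eq0 => /eqP Ei.
have i0 : ('i : R[i]) != 0 by rewrite -normr_eq0 normCi oner_eq0.
apply/eqP; rewrite -subr_eq0.
set p1 := ip (f u) (g v) in E1 Ei *; set q1 := ip (k u) (l v) in E1 Ei *.
set p2 := ip (f v) (g u) in E1 Ei; set q2 := ip (k v) (l u) in E1 Ei.
set a1 := ip (k v) (l v) in E1 Ei; set a2 := ip (k u) (l u) in E1 Ei.
clearbody p1 q1 p2 q2 a1 a2.
have -> : p1 - q1 = ((a1 + p2 + (p1 + a2) - (a1 + q2 + (q1 + a2)))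
   - ('i * (- 'i * a1) + 'i * p2 + (- 'i * p1 + a2)
      - ('i * (- 'i * a1) + 'i * q2 + (- 'i * q1 + a2))) / 'i) / 2 by field.
by rewrite E1 Ei !mul0r subrr mul0r.
Qed.

End InnerProduct.

Section StarRepresentation.
Context (R : realType) (A : lmodType R[i]) (star : A -> A)
  (Gam : A -> A -> Prop) (mul : A -> A -> A)
  (H : lmodType R[i]) (ip : H -> H -> R[i]) (D : H -> Prop) (pi : A -> H -> H).
Hypothesis Hstar : partial_star_algebra star Gam mul.
Hypothesis Hip : is_inner_product ip.
Hypothesis Hrep : star_rep star Gam mul ip D pi.

Lemma starK z : star (star z) = z.
Proof. by case: Hstar => _ h *; apply: h. Qed.

Lemma GamS z w : Gam z w -> Gam (star w) (star z).
Proof. by case: Hstar => _ _ h _ _ /h. Qed.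

Lemma D_dense : dense_subspace ip D.
Proof. by case: Hrep. Qed.

Lemma D_lin a u v : D u -> D v -> D (a *: u + v).
Proof. by case: D_dense => _ h _; apply: h. Qed.

Lemma D_ip_inj w1 w2 : (forall d, D d -> ip d w1 = ip d w2) -> w1 = w2.
Proof. exact: (ip_dense_inj Hip D_dense). Qed.

Lemma pi_lin a z w u : D u -> pi (a *: z + w) u = a *: pi z u + pi w u.
Proof. by case: Hrep => _ h *; apply: h. Qed.

Lemma piD z w u : D u -> pi (z + w) u = pi z u + pi w u.
Proof. by move=> Du; have := pi_lin 1 z w Du; rewrite !scale1r. Qed.

Lemma pi0 u : D u -> pi 0 u = 0.
Proof. by move=> Du; apply: (addrI (pi 0 u)); rewrite addr0 -piD // addr0. Qed.

Lemma piZ a z u : D u -> pi (a *: z) u = a *: pi z u.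
Proof. by move=> Du; rewrite -[a *: z]addr0 pi_lin // pi0 // addr0. Qed.

Lemma piB z w u : D u -> pi (z - w) u = pi z u - pi w u.
Proof. by move=> Du; rewrite piD // -scaleN1r piZ // scaleN1r. Qed.

Lemma pi_linear_on z : linear_on D (pi z).
Proof. by case: Hrep => _ _ h _ _; case: (h z). Qed.

Lemma pi_adj z u d : D u -> D d -> ip (pi z d) u = ip d (pi (star z) u).
Proof. by case: Hrep => _ _ _ h _ Du Dd; apply: (h z u Du d (pi z d)). Qed.

Lemma pi_star_adj z u d : D u -> D d -> ip (pi (star z) d) u = ip d (pi z u).
Proof. by move=> Du Dd; rewrite pi_adj // starK. Qed.

Lemma daggerP z u v : dagger ip D (pi z) u v <-> D u /\ v = pi (star z) u.
Proof.
split=> [[Du hadj]|[Du ->]].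
  split=> //; apply: D_ip_inj => d Dd.
  by rewrite -(hadj d (pi z d)) ?pi_adj.
by split=> // d _ [Dd ->]; rewrite pi_adj.
Qed.

Lemma ip_pi_mul z w u d : Gam z w -> D u -> D d ->
  ip (pi (star z) d) (pi w u) = ip d (pi (mul z w) u).
Proof.
case: Hrep => _ _ _ _ h G Du Dd.
by case: (h z w G) => _ _ h3; apply: (h3 u Du d); apply/daggerP.
Qed.

Lemma pi_mul_comp z w d : Gam z w -> D d -> D (pi w d) -> pi (mul z w) d = pi z (pi w d).
Proof.
move=> G Dd Dwd; apply: D_ip_inj => d' Dd'.
by rewrite -ip_pi_mul // pi_star_adj.
Qed.

Lemma gclosure_pi_ip z (w v d : H) :
  gclosure ip (op_graph D (pi z)) w v -> D d -> ip d v = ip (pi (star z) d) w.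
Proof.
move=> hcl Dd; apply/eqP; rewrite -subr_eq0; apply/eqP.
apply: (norm_le_eps_eq0 (a := hnorm ip d) (b := hnorm ip (pi (star z) d)));
  rewrite ?hnorm_ge0 // => eps ep.
have [u' [_ [[Du' ->] hw hv]]] := hcl eps ep.
have -> : ip d v - ip (pi (star z) d) w =
          ip d (v - pi z u') - ip (pi (star z) d) (w - u').
  by rewrite !ipBr // (pi_star_adj z Du' Dd); ring.
apply: (le_trans (ler_normB _ _)); apply: lerD;
  by apply: (le_trans (cauchy_schwarz Hip _ _)); rewrite ler_wpM2l ?hnorm_ge0 // ltW.
Qed.

Lemma gclosure_pi_mul z w u v : Gam z w -> D u ->
  gclosure ip (op_graph D (pi z)) (pi w u) v -> v = pi (mul z w) u.
Proof.
move=> G Du hcl; apply: D_ip_inj => d Dd.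
by rewrite (gclosure_pi_ip hcl Dd) ip_pi_mul.
Qed.

Lemma restricted_adjoint_pi z w (s t : H) : Gam (star z) w ->
  grestrict (adjoint ip (op_graph D (pi z))) (Defs.image D (pi w)) s t ->
  exists2 d, D d & s = pi w d /\ t = pi (mul (star z) w) d.
Proof.
move=> G [[d [Dd ->]] hadj]; exists d => //; split=> //.
apply: D_ip_inj => d' Dd'.
by rewrite -(hadj d' (pi z d')) // -ip_pi_mul // starK.
Qed.

Section QuasiSymmetric.
Hypothesis Hqs : quasi_symmetric star Gam ip D pi.

Lemma gclosure_pi_dom x (w v : H) :
  (forall z d, Gam z x -> D d ->
     ip (pi (mul (star x) (star z)) d) w = ip (pi (star z) d) v) ->
  gdom (gclosure ip (op_graph D (pi x))) w.
Proof.
move=> hv; apply/(proj1 (Hqs x)) => z G; exists v => s t hst.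
by have [d Dd [-> ->]] := restricted_adjoint_pi (GamS G) hst; apply: hv.
Qed.

Lemma gclosure_dagger_dom y (w v : H) :
  (forall v' d, Gam y v' -> D d -> ip (pi (mul y v') d) w = ip (pi v' d) v) ->
  gdom (gclosure ip (dagger ip D (pi y))) w.
Proof.
move=> hv; apply/(proj2 (Hqs y)) => v' G; exists v => s t hst.
have G' : Gam (star (star y)) v' by rewrite starK.
by have [d Dd [-> ->]] := restricted_adjoint_pi G' hst; rewrite starK; apply: hv.
Qed.

End QuasiSymmetric.
End StarRepresentation.

Lemma le_max_l (T : numDomainType) (a b : T) : a <= Num.max a b.
Proof. by rewrite /Num.max /Order.max; case: ifP => [/ltW|]. Qed.

Section SeminormTopology.
Context (R : realType) (A : lmodType R[i]) (star : A -> A).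

Lemma tnbhs_sub (Q : (A -> R[i]) -> Prop) z (U V : A -> Prop) :
  tnbhs Q z U -> (forall w, U w -> V w) -> tnbhs Q z V.
Proof. by case=> s [eps [hs ep hU]] hUV; exists s, eps; split=> // w /hU/hUV. Qed.

Lemma tnbhs_Pstar (P : (A -> R[i]) -> Prop) z U :
  tnbhs P z U -> tnbhs (Pstar star P) z U.
Proof.
case=> s [eps [hs ep hU]].
pose pstar (p : A -> R[i]) := fun w => Num.max (p w) (p (star w)).
exists (List.map pstar s), eps; split=> //.
  by move=> q /List.in_map_iff [p [<- ps]]; exists p; split=> //; apply: hs.
move=> w hw; apply: hU => p ps.
exact: le_lt_trans (le_max_l _ _) (hw _ (List.in_map pstar _ _ ps)).
Qed.

End SeminormTopology.

Section VectorForms.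
Context (R : realType) (A : lmodType R[i]) (star : A -> A)
  (Gam : A -> A -> Prop) (mul : A -> A -> A) (P : (A -> R[i]) -> Prop) (B : A -> Prop)
  (H : lmodType R[i]) (ip : H -> H -> R[i]) (D : H -> Prop) (pi : A -> H -> H).
Hypothesis Hstar : partial_star_algebra star Gam mul.
Hypothesis Hcore : multiplication_core star Gam mul P B.
Hypothesis Hip : is_inner_product ip.
Hypothesis Hrep : star_rep star Gam mul ip D pi.
Hypothesis Hcont : rep_cont P ip D pi.
Hypothesis HBD : forall b, B b -> in_LdaggerD ip D (pi b).

Lemma core_RA b : B b -> RA Gam b.
Proof. by case: Hcore => [[_ h]] *; apply: h. Qed.

Lemma core_tau_star_dense z U : tnbhs (Pstar star P) z U -> exists b, B b /\ U b.
Proof. by case: Hcore => _ _ h _ _; apply: h. Qed.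

Lemma core_D b u : B b -> D u -> D (pi b u).
Proof. by move=> /HBD [_ h _]; apply: h. Qed.

Lemma pi_mul_core z b xi : B b -> D xi -> pi (mul z b) xi = pi z (pi b xi).
Proof.
by move=> Bb Dxi; apply: (pi_mul_comp Hstar Hip Hrep (core_RA Bb z) Dxi (core_D Bb Dxi)).
Qed.

Lemma vector_form_ips xi : D xi -> ips_form star Gam mul B (fun a b => ip (pi a xi) (pi b xi)).
Proof.
move=> Dxi; split.
- split=> [a z w v|a z w v|z]; last exact: ip_ge0.
    by rewrite (pi_lin Hrep) // ip_linl.
  by rewrite (pi_lin Hrep) // ipDr // ipZr.
- exact: core_RA.
- move=> z eps ep.
  have [b [Bb hb]] := core_tau_star_dense (tnbhs_Pstar star (Hcont Dxi z ep)).
  exists b; split=> //; change (hnorm ip (pi (z - b) xi) < eps).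
  by rewrite (piB Hrep) // (hnorm_distC Hip).
- move=> z a b Ba Bb.
  by rewrite !pi_mul_core // (pi_adj Hrep) //; apply: core_D.
- move=> z w a b G Ba Bb.
  rewrite (pi_mul_core _ Ba) // !(pi_mul_core _ Bb) //.
  by rewrite (ip_pi_mul Hip Hrep) //; apply: core_D.
Qed.

Lemma vector_form_tau_cont xi : D xi -> tau_cont_form P (fun a b => ip (pi a xi) (pi b xi)).
Proof.
move=> Dxi; exists (fun z => hnorm ip (pi z xi)); split; last by move=> z w; apply: cauchy_schwarz.
split.
  split=> [z|z w|a z]; first exact: hnorm_ge0.
    by rewrite (piD Hrep) //; apply: hnormD.
  by rewrite (piZ Hrep) // hnormZ.
move=> z0 eps ep; apply: (tnbhs_sub (Hcont Dxi z0 ep)) => z.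
exact/le_lt_trans/hnorm_dist_dist.
Qed.

Lemma vector_form_PB xi : D xi -> PB star Gam mul P B (fun a b => ip (pi a xi) (pi b xi)).
Proof. by move=> Dxi; split; [apply: vector_form_ips | apply: vector_form_tau_cont]. Qed.

End VectorForms.

Section StrongProduct.
Context (R : realType) (A : lmodType R[i]) (star : A -> A)
  (Gam : A -> A -> Prop) (mul : A -> A -> A) (P : (A -> R[i]) -> Prop) (B : A -> Prop)
  (e x y : A) (H : lmodType R[i]) (ip : H -> H -> R[i]) (D : H -> Prop) (pi : A -> H -> H).
Hypothesis Hstar : partial_star_algebra star Gam mul.
Hypothesis Hcore : multiplication_core star Gam mul P B.
Hypothesis Hunit : is_unit star Gam mul e.
Hypothesis Be : B e.
Hypothesis Hxy : strong_product_wd star Gam mul (PB star Gam mul P B) B x y.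
Hypothesis Hip : is_inner_product ip.
Hypothesis Hrep : star_rep star Gam mul ip D pi.
Hypothesis Hcont : rep_cont P ip D pi.
Hypothesis HBD : forall b, B b -> in_LdaggerD ip D (pi b).

Lemma mule z : mul z e = z.
Proof. by case: Hunit => _ _ _ h; case: (h z). Qed.

(* (sm_1) for the vector forms with [a = b = e], polarized in the vector. *)
Lemma strong_product_ip_left z : Gam z x -> forall d u, D d -> D u ->
  ip (pi (mul (star x) (star z)) d) (pi y u) = ip (pi (star z) d) (pi (mul x y) u).
Proof.
move=> G; apply: (polarization Hip (D_lin Hrep)); try exact: (pi_linear_on Hrep).
move=> xi Dxi; rewrite (ipC Hip) [RHS](ipC Hip); congr (_^*).
case: Hxy => _ sm1 _.
by have := sm1 z _ e e G (vector_form_PB Hstar Hcore Hip Hrep Hcont HBD Dxi) Be Be; rewrite !mule.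
Qed.

(* (sm_2), likewise. *)
Lemma strong_product_ip_right v : Gam y v -> forall d u, D d -> D u ->
  ip (pi (mul y v) d) (pi (star x) u) = ip (pi v d) (pi (mul (star y) (star x)) u).
Proof.
move=> G; apply: (polarization Hip (D_lin Hrep)); try exact: (pi_linear_on Hrep).
move=> xi Dxi; rewrite (ipC Hip) [RHS](ipC Hip); congr (_^*).
case: Hxy => _ _ sm2.
by have := sm2 v _ e e G (vector_form_PB Hstar Hcore Hip Hrep Hcont HBD Dxi) Be Be; rewrite !mule.
Qed.

End StrongProduct.

Theorem proposition3p13 (R : realType) (A : lmodType R[i]) (star : A -> A)
  (Gam : A -> A -> Prop) (mul : A -> A -> A) (P : (A -> R[i]) -> Prop)
  (B : A -> Prop) (e : A) (x y : A) :
  topological_partial_star_algebra star Gam mul P ->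
  star_semisimple star Gam mul P ->
  multiplication_core star Gam mul P B ->
  is_unit star Gam mul e -> B e ->
  strong_product_wd star Gam mul (PB star Gam mul P B) B x y ->
  forall (H : lmodType R[i]) (ip : H -> H -> R[i]) (D : H -> Prop) (pi : A -> H -> H),
    is_hilbert ip ->
    star_rep star Gam mul ip D pi ->
    rep_cont P ip D pi ->
    quasi_symmetric star Gam ip D pi ->
    (forall b, B b -> in_LdaggerD ip D (pi b)) ->
    (forall u, D u -> pi e u = u) ->
    strong_product_op_wd ip D (pi x) (pi y) /\
    strong_product_op_eq ip D (pi x) (pi y) (pi (mul x y)).
Proof.
move=> [Hstar _ _ _] _ Hcore Hunit Be Hxy H ip D pi [Hip _] Hrep Hcont Hqs HBD _.
have sm1 := strong_product_ip_left Hstar Hcore Hunit Be Hxy Hip Hrep Hcont HBD.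
have sm2 := strong_product_ip_right Hstar Hcore Hunit Be Hxy Hip Hrep Hcont HBD.
have Gxy : Gam x y by case: Hxy.
have closure_piy u : D u -> gclosure ip (op_graph D (pi x)) (pi y u) (pi (mul x y) u).
  move=> Du; have [v hv] := gclosure_pi_dom Hstar Hip Hrep Hqs
    (fun z d G Dd => sm1 z G d u Dd Du).
  by rewrite -(gclosure_pi_mul Hstar Hip Hrep Gxy Du hv).
split; first split.
- by move=> u /closure_piy; exists (pi (mul x y) u).
- move=> u v /(daggerP Hip Hrep) [Du ->].
  exact: gclosure_dagger_dom Hstar Hip Hrep Hqs _ _ _ (fun v' d G Dd => sm2 v' G d u Dd Du).
- exact: closure_piy.
Qed.
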